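(* Let $\gamma>0$, $\alpha\in\mathbb{R}$ and $p\ge\max\{1,1-\alpha\}$. There is a constant $C>0$ depending only on $p,\gamma,\alpha$ such that for every characteristic function $f$ of a measurable subset of $(0,\infty)$ of finite Lebesgue measure, $$\int_0^\infty f(t)\sinh^\gamma t\,dt\le C\Big(\int_0^\infty f(t)\cosh^\alpha t\,\sinh^{p\gamma-\alpha}t\,dt\Big)^{1/p}.$$ *)

From HB Require Import structures.
From mathcomp Require Import all_boot all_order all_algebra.
From mathcomp Require Import all_classical all_reals all_analysis.
Set Implicit Arguments. Unset Strict Implicit. Unset Printing Implicit Defensive.
Import Order.TTheory GRing.Theory Num.Theory.
Local Open Scope ring_scope.

Definition sinh {R : realType} (t : R) : R := (expR t - expR (- t)) / 2.
Definition cosh {R : realType} (t : R) : R := (expR t + expR (- t)) / 2.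

From HB Require Import structures.
From mathcomp Require Import all_boot all_order all_algebra.
From mathcomp Require Import all_classical all_reals all_analysis.
From mathcomp Require Import lra measurable_realfun.
Import Order.TTheory GRing.Theory Num.Theory.
Local Open Scope classical_set_scope.
Local Open Scope ring_scope.

(* On [a, +oo) the ratio of the two integrands,
     cosh^α t sinh^(pγ-α) t / sinh^γ t = sinh^((p-1)γ) t tanh^(-α) t,
   is at least sinh^((p-1)γ) a tanh^ν a with ν = max(0, -α), because sinh and
   tanh increase and tanh <= 1.  So, Y being the right-hand integral, the
   left-hand one is at most  ∫_0^a sinh^γ + Y / (sinh^((p-1)γ) a tanh^ν a)  for
   every a > 0.  When Y = e^(pz) take a = e^(z/(γ+1))/2 if z <= 0, where
   ∫_0^a sinh^γ <= a sinh^γ a and ν <= p - 1 is needed, and a = 1 + z/γ if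
   z >= 0, where ∫_0^a sinh^γ <= e^(γa)/γ: both terms are O(e^z) = O(Y^(1/p)). *)

Section sinh_weighted_inequality.
Context {R : realType}.
Set Implicit Arguments. Unset Strict Implicit.
Implicit Types (s t a : R).
Local Notation mu := (@lebesgue_measure R).

Lemma sinh0 : sinh 0 = 0 :> R.
Proof. by rewrite /sinh oppr0 subrr mul0r. Qed.

Lemma sinh_gt0 t : 0 < t -> 0 < sinh t.
Proof. by move=> t0; rewrite /sinh divr_gt0// subr_gt0 ltr_expR; lra. Qed.

Lemma cosh_gt0 t : 0 < cosh t.
Proof. by rewrite /cosh divr_gt0// addr_gt0// expR_gt0. Qed.

Lemma ler_sinh : {homo @sinh R : s t / s <= t}.
Proof. by move=> s t st; rewrite /sinh ler_pM2r// lerB// ler_expR; lra. Qed.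

Lemma sinh_le_cosh t : sinh t <= cosh t.
Proof. by rewrite /sinh /cosh ler_pM2r// lerD2l; have := expR_gt0 (- t); lra. Qed.

Lemma sinh_le_expR t : sinh t <= expR t.
Proof. by rewrite /sinh; have := expR_gt0 (- t); have := expR_gt0 t; lra. Qed.

(* tanh is nondecreasing *)
Lemma ler_sinh_cosh s t : s <= t -> sinh s * cosh t <= sinh t * cosh s.
Proof.
move=> st; have : expR s * expR (- t) <= expR t * expR (- s).
  by rewrite -!expRD ler_expR; lra.
by rewrite /sinh /cosh; nra.
Qed.

Lemma sinh_cosh_le_half a : 0 <= a <= 2^-1 ->
  [/\ a / 2 <= sinh a, sinh a <= 2 * a & cosh a <= 2].
Proof.
move=> /andP[a0 a1]; rewrite /sinh /cosh.
have := expR_ge1Dx a; have := expR_ge1Dx (- a).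
have : expR (- a) <= 1 by rewrite -expR0 ler_expR; lra.
have : expR a * expR (- a) = 1 by rewrite -expRD subrr expR0.
have := expR_gt0 a; have := expR_gt0 (- a).
by split; nra.
Qed.

Lemma sinh_cosh_ge1 a : 1 <= a -> expR a / 4 <= sinh a /\ cosh a <= 2 * sinh a.
Proof.
move=> a1; rewrite /sinh /cosh.
have := expR_ge1Dx a; have := expR_ge1Dx (- a).
have : expR (- a) <= 1 by rewrite -expR0 ler_expR; lra.
have : expR a * expR (- a) = 1 by rewrite -expRD subrr expR0.
have := expR_gt0 a; have := expR_gt0 (- a).
by split; nra.
Qed.

Lemma measurable_sinh : measurable_fun setT (@sinh R).
Proof.
apply: measurable_funM => //; apply: measurable_funB => //.
exact: measurableT_comp.
Qed.

Lemma measurable_cosh : measurable_fun setT (@cosh R).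
Proof.
apply: measurable_funM => //; apply: measurable_funD => //.
exact: measurableT_comp.
Qed.

Lemma measurable_sinh_powR r : measurable_fun setT (fun t : R => sinh t `^ r).
Proof. exact: measurableT_comp (measurable_powR _) measurable_sinh. Qed.

Lemma measurable_cosh_sinh_powR r s :
  measurable_fun setT (fun t : R => cosh t `^ r * sinh t `^ s).
Proof.
apply: measurable_funM; last exact: measurable_sinh_powR.
exact: measurableT_comp (measurable_powR _) measurable_cosh.
Qed.

Lemma integral_indic_le (D B : set R) (f : R -> R) :
  measurable D -> measurable B -> measurable_fun setT f -> (forall t, 0 <= f t) ->
  (\int[mu]_(t in D) ((\1_B t : R) * f t)%:E <= \int[mu]_(t in B) (f t)%:E)%E.
Proof.
move=> mD mB mf f0.
have -> : (\int[mu]_(t in D) ((\1_B t : R) * f t)%:E =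
           \int[mu]_(t in D) ((fun t => (f t)%:E) \_ B) t)%E.
  by apply: eq_integral => t _; rewrite /patch indicE; case: ifPn; rewrite ?mul1r ?mul0r.
rewrite -integral_mkcondr; apply: ge0_subset_integral => //.
- exact: measurableI.
- exact/measurable_EFinP/measurable_funTS.
- by move=> t _; rewrite lee_fin.
Qed.

Lemma integral_indic_split (f g : R -> R) (A : set R) (a m : R) :
  measurable A -> measurable_fun setT f -> measurable_fun setT g ->
  (forall t, 0 <= f t) -> (forall t, 0 <= g t) -> 0 < m ->
  (forall t, a < t -> m * f t <= g t) ->
  (\int[mu]_(t in `]0%R, +oo[) ((\1_A t : R) * f t)%:E
   <= \int[mu]_(t in `[0%R, a]) (f t)%:E
      + m^-1%:E * \int[mu]_(t in `]0%R, +oo[) ((\1_A t : R) * g t)%:E)%E.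
Proof.
move=> mA mf mg f0 g0 m0 fg.
have mindic (B : set R) (h : R -> R) : measurable B -> measurable_fun setT h ->
    measurable_fun (`]0%R, +oo[ : set R) (fun t => ((\1_B t : R) * h t)%:E).
  move=> mB mh; apply/measurable_EFinP/measurable_funTS.
  exact: measurable_funM.
have indic_ge0 (B : set R) (h : R -> R) : (forall t, 0 <= h t) ->
    forall t, (0 <= ((\1_B t : R) * h t)%:E)%E.
  by move=> h0 t; rewrite lee_fin mulr_ge0.
have m0a : measurable (`[0%R, a] : set R) by [].
apply: le_trans (_ : _ <= \int[mu]_(t in `]0%R, +oo[)
   (((\1_`[0%R, a] t : R) * f t)%:E + m^-1%:E * ((\1_A t : R) * g t)%:E))%E _.
  apply: ge0_le_integral => //.
  - by move=> t _; exact: indic_ge0.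
  - exact: mindic.
  - exact: emeasurable_funD (mindic _ _ m0a mf)
                            (measurable_funeM _ (mindic _ _ mA mg)).
  move=> t; rewrite /= in_itv /= andbT => t0.
  rewrite -EFinM -EFinD lee_fin !indicE.
  have [ta|at_] := leP t a.
    have -> : t \in (`[0%R, a]%classic : set R) by rewrite inE /= in_itv /= ta ltW.
    rewrite mul1r; case: (t \in A); rewrite ?mul1r ?mul0r ?mulr0 ?addr0 ?f0//.
    by rewrite lerDl mulr_ge0// invr_ge0 ltW.
  have -> : t \in (`[0%R, a]%classic : set R) = false.
    by apply: memNset; rewrite /= in_itv /= (leNgt t a) at_ andbF.
  rewrite mul0r add0r; case: (t \in A); rewrite ?mul1r ?mul0r ?mulr0//.
  by rewrite ler_pdivlMl// fg.
rewrite ge0_integralD//; last 4 first.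
- by move=> t _; exact: indic_ge0.
- exact: mindic.
- by move=> t _; rewrite mule_ge0 ?indic_ge0// lee_fin invr_ge0 ltW.
- by apply: measurable_funeM; exact: mindic.
rewrite ge0_integralZl_EFin ?invr_ge0 ?(ltW m0)//; last 2 first.
- by move=> t _; exact: indic_ge0.
- exact: mindic.
by apply: leeD => //; exact: integral_indic_le.
Qed.

Lemma is_derive_expRM (c x : R) :
  is_derive x 1 (fun y : R => expR (c * y)) (c * expR (c * x)).
Proof.
rewrite mulrC; apply: is_derive1_comp.
by apply: is_derive_eq; rewrite /GRing.scale /= mulr1.
Qed.

Lemma integral_expRM (c a : R) : 0 < c -> 0 < a ->
  (\int[mu]_(x in `[0%R, a]) (expR (c * x))%:E = ((expR (c * a) - 1) / c)%:E)%E.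
Proof.
move=> c0 a0; have cN0 : c != 0 by rewrite gt_eqF.
have dF (y : R) : is_derive y 1 (fun y : R => c^-1 * expR (c * y)) (expR (c * y)).
  apply: is_derive_eq (is_deriveZ c^-1 (is_derive_expRM c y)) _.
  by rewrite /GRing.scale /= mulrA mulVf ?mul1r.
have cF : continuous (fun y : R^o => c^-1 * expR (c * y) : R^o).
  by move=> y; apply: differentiable_continuous; apply/derivable1_diffP.
rewrite (continuous_FTC2 a0 _ _ (F := fun y => c^-1 * expR (c * y))).
- by rewrite mulr0 expR0 -EFinB -mulrBr mulrC.
- have ce : continuous (fun y : R^o => expR (c * y) : R^o).
    move=> y; apply: differentiable_continuous; apply/derivable1_diffP.
    by have [] := is_derive_expRM c y.
  exact: continuous_subspaceT ce.
- split; first by move=> y _.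
  + exact/cvg_at_right_filter/cF.
  + exact/cvg_at_left_filter/cF.
- by move=> y _; rewrite derive1E; have [_ ->] := dF y.
Qed.

Lemma integral_sinh_powR_le_mul (r a : R) : 0 <= r -> 0 < a ->
  (\int[mu]_(t in `[0%R, a]) (sinh t `^ r)%:E <= (a * sinh a `^ r)%:E)%E.
Proof.
move=> r0 a0.
apply: le_trans (_ : _ <= \int[mu]_(t in `[0%R, a]) (cst (sinh a `^ r)%:E) t)%E _.
  apply: ge0_le_integral => //.
  - by move=> t _; rewrite lee_fin powR_ge0.
  - apply/measurable_EFinP; apply: measurable_funTS; exact: measurable_sinh_powR.
  move=> t; rewrite /= in_itv /= => /andP[t0 ta].
  have s0 : 0 <= sinh t by rewrite -sinh0; exact: ler_sinh.
  rewrite lee_fin ge0_ler_powR// ?nnegrE//; last exact: ler_sinh.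
  by apply: le_trans s0 _; apply: ler_sinh.
rewrite integral_cst// (_ : (a * _)%:E = (sinh a `^ r)%:E * mu `[0%R, a])%E//.
by rewrite lebesgue_measure_itv /= lte_fin a0 sube0 -EFinM mulrC.
Qed.

Lemma integral_sinh_powR_le_expR (r a : R) : 0 < r -> 0 < a ->
  (\int[mu]_(t in `[0%R, a]) (sinh t `^ r)%:E <= (expR (r * a) / r)%:E)%E.
Proof.
move=> r0 a0.
apply: le_trans (_ : _ <= \int[mu]_(t in `[0%R, a]) (expR (r * t))%:E)%E _.
  apply: ge0_le_integral => //.
  - by move=> t _; rewrite lee_fin powR_ge0.
  - apply/measurable_EFinP; apply: measurable_funTS; exact: measurable_sinh_powR.
  - apply/measurable_EFinP/measurable_funTS.
    apply: measurableT_comp (@measurable_expR R) _.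
    exact: (@measurable_funM _ _ _ _ (cst r) id).
  move=> t; rewrite /= in_itv /= => /andP[t0 _].
  have s0 : 0 <= sinh t by rewrite -sinh0; exact: ler_sinh.
  rewrite lee_fin mulrC expRM ge0_ler_powR ?nnegrE ?expR_ge0 ?sinh_le_expR//.
  exact: ltW.
rewrite integral_expRM// lee_fin ler_pM2r ?invr_gt0//.
by rewrite lerBlDr lerDl.
Qed.

Section power_bound.
Local Open Scope ereal_scope.

Lemma le_mul_poweR_of_expR (X Y : \bar R) (C p : R) :
  (0 < C)%R -> (0 < p)%R -> 0 <= Y ->
  (forall z, Y <= (expR (p * z))%:E -> X <= (C * expR z)%:E) ->
  X <= C%:E * Y `^ p^-1%R.
Proof.
move=> C0 p0 + XY; have pV0 : (p^-1 != 0)%R by rewrite invr_eq0 gt_eqF.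
case: Y XY => [y| |] XY Y0; last 2 first.
- by rewrite poweRyr// gt0_muley ?lte_fin// leey.
- by move: Y0; rewrite leeNy_eq.
move: Y0; rewrite lee_fin le_eqVlt => /predU1P[y0|y0].
  rewrite -y0 in XY *; rewrite poweR0r// mule0; apply/lee_addgt0Pr => e e0; rewrite add0e.
  have := XY (ln (e / C))%R; rewrite lnK ?posrE ?divr_gt0// mulrCA mulfV ?gt_eqF//.
  by rewrite mulr1; apply; rewrite lee_fin expR_ge0.
apply: le_trans (XY (p^-1 * ln y)%R _) _.
  by rewrite mulrA mulfV ?gt_eqF// mul1r lnK.
by rewrite poweR_EFin -EFinM /powR gt_eqF.
Qed.

End power_bound.

Implicit Types (gamma alpha p w z : R).

Lemma max0N_bounds alpha p : 1 <= p -> 1 - alpha <= p ->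
  [/\ 0 <= Num.max 0 (- alpha), - alpha <= Num.max 0 (- alpha)
    & Num.max 0 (- alpha) <= p - 1].
Proof.
move=> p1 pa; split; rewrite ?le_max ?ge_max ?lexx ?orbT//.
by apply/andP; split; lra.
Qed.

(* Logarithm of sinh^((p-1)γ) a * tanh^(max 0 (-α)) a, which bounds the ratio
   of the two integrands from below on [a, +oo). *)
Definition ln_ratio_lb gamma alpha p a :=
  (p - 1) * gamma * ln (sinh a) + Num.max 0 (- alpha) * (ln (sinh a) - ln (cosh a)).

Lemma sinh_powR_le_weight gamma alpha p a t w :
  0 < gamma -> 1 <= p -> 1 - alpha <= p -> 0 < a -> a <= t ->
  w <= ln_ratio_lb gamma alpha p a ->
  expR w * sinh t `^ gamma <= cosh t `^ alpha * sinh t `^ (p * gamma - alpha).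
Proof.
move=> g0 p1 pa a0 at_; rewrite /ln_ratio_lb.
have [nu0 nu_ge _] := max0N_bounds p1 pa.
have t0 : 0 < t by exact: lt_le_trans at_.
have st := sinh_gt0 t0; have ct := cosh_gt0 t.
have sa := sinh_gt0 a0; have ca := cosh_gt0 a.
rewrite /powR !gt_eqF// -!expRD ler_expR.
have h1 : ln (sinh a) <= ln (sinh t) by rewrite ler_ln ?posrE// ler_sinh.
have h2 : ln (sinh a) + ln (cosh t) <= ln (sinh t) + ln (cosh a).
  rewrite -!lnM ?posrE// ler_ln ?posrE ?ler_sinh_cosh//; exact: mulr_gt0.
have h3 : ln (sinh t) <= ln (cosh t) by rewrite ler_ln ?posrE// sinh_le_cosh.
have q0 : 0 <= (p - 1) * gamma by apply: mulr_ge0; lra.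
set nu := Num.max 0 (- alpha) in nu0 nu_ge *.
set Ls := ln (sinh t) in h1 h2 h3 *; set Lc := ln (cosh t) in h2 h3 *.
set La := ln (sinh a) in h1 h2 *; set Lca := ln (cosh a) in h2 *.
nra.
Qed.

Lemma exists_split_point_le0 gamma alpha p z :
  0 < gamma -> 1 <= p -> 1 - alpha <= p -> z <= 0 ->
  exists a, [/\ 0 < a,
    (\int[mu]_(t in `[0%R, a]) (sinh t `^ gamma)%:E
       <= (expR z / 2)%:E)%E &
    (p - 1) * z - (2 * (p - 1) * gamma * ln 2 + 3 * Num.max 0 (- alpha) * ln 2)
      <= ln_ratio_lb gamma alpha p a].
Proof.
move=> g0 p1 pa z0; have [nu0 _ nu_le] := max0N_bounds p1 pa.
set lb := z / (gamma + 1); set b := expR lb; set a := b / 2.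
have zE : z = (gamma + 1) * lb by rewrite /lb mulrCA mulfV ?mulr1 // gt_eqF//; lra.
have lb0 : lb <= 0 by rewrite /lb pmulr_lle0// invr_gt0; lra.
have b0 : 0 < b := expR_gt0 lb.
have b1 : b <= 1 by rewrite /b -expR0 ler_expR.
have a0 : 0 < a by rewrite divr_gt0.
have [sa_ge sa_le ca_le] : [/\ a / 2 <= sinh a, sinh a <= 2 * a & cosh a <= 2].
  by apply: sinh_cosh_le_half; apply/andP; split; rewrite /a; lra.
have sa := sinh_gt0 a0.
have l2 : 0 < ln (2 : R) by apply: ln_gt0; lra.
have Ls : lb - 2 * ln 2 <= ln (sinh a).
  have <- : ln (a / 2) = lb - 2 * ln 2.
    by rewrite /a /b !ln_div ?posrE ?divr_gt0 ?expR_gt0// expRK; lra.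
  by rewrite ler_ln// posrE divr_gt0.
have Lc : ln (cosh a) <= ln 2 by rewrite ler_ln ?posrE ?cosh_gt0.
exists a; split => //.
  apply: le_trans (integral_sinh_powR_le_mul (ltW g0) a0) _; rewrite lee_fin.
  have -> : expR z / 2 = a * b `^ gamma.
    by rewrite /powR gt_eqF// expRK /a mulrAC -expRD zE; congr (expR _ / 2); lra.
  rewrite ler_wpM2l ?(ltW a0)// ge0_ler_powR ?nnegrE ?(ltW g0) ?(ltW sa) ?(ltW b0)//.
  by rewrite /a in sa_le *; lra.
rewrite /ln_ratio_lb; have q0 : 0 <= (p - 1) * gamma by apply: mulr_ge0; lra.
set nu := Num.max 0 (- alpha) in nu0 nu_le *; rewrite zE; nra.
Qed.

Lemma exists_split_point_ge0 gamma alpha p z :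
  0 < gamma -> 1 <= p -> 1 - alpha <= p -> 0 <= z ->
  exists a, [/\ 0 < a,
    (\int[mu]_(t in `[0%R, a]) (sinh t `^ gamma)%:E
       <= (expR gamma / gamma * expR z)%:E)%E &
    (p - 1) * z - (2 * (p - 1) * gamma * ln 2 + 3 * Num.max 0 (- alpha) * ln 2)
      <= ln_ratio_lb gamma alpha p a].
Proof.
move=> g0 p1 pa z0; have [nu0 _ _] := max0N_bounds p1 pa.
set a := 1 + z / gamma.
have ga : gamma * a = gamma + z by rewrite /a mulrDr mulr1 mulrCA mulfV ?gt_eqF ?mulr1.
have a1 : 1 <= a by rewrite /a lerDl divr_ge0// ltW.
have a0 : 0 < a by lra.
have [sa_ge ca_le] := sinh_cosh_ge1 a1.
have sa := sinh_gt0 a0; have ca := cosh_gt0 a.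
have l2 : 0 < ln (2 : R) by apply: ln_gt0; lra.
have ln4 : ln 4 = 2 * ln 2 :> R.
  by rewrite -[4%R]/((2 * 2)%:R) natrM lnM ?posrE//; lra.
have Ls : a - 2 * ln 2 <= ln (sinh a).
  have : ln (expR a / 4) <= ln (sinh a) by rewrite ler_ln// posrE divr_gt0 ?expR_gt0.
  by rewrite ln_div ?posrE ?expR_gt0// expRK ln4.
have Lc : ln (cosh a) <= ln 2 + ln (sinh a).
  by rewrite -lnM ?posrE// ler_ln// posrE mulr_gt0.
exists a; split => //.
  apply: le_trans (integral_sinh_powR_le_expR g0 a0) _.
  by rewrite lee_fin ga expRD mulrAC.
rewrite /ln_ratio_lb; have q0 : 0 <= (p - 1) * gamma by apply: mulr_ge0; lra.
set nu := Num.max 0 (- alpha) in nu0 *; nra.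
Qed.

Lemma weighted_expR_bound gamma alpha p :
  0 < gamma -> 1 <= p -> 1 - alpha <= p ->
  exists2 C, 0 < C & forall (A : set R) z, measurable A ->
    (\int[mu]_(t in `]0%R, +oo[)
        ((\1_A t : R) * cosh t `^ alpha * sinh t `^ (p * gamma - alpha))%:E
       <= (expR (p * z))%:E ->
     \int[mu]_(t in `]0%R, +oo[) ((\1_A t : R) * sinh t `^ gamma)%:E
       <= (C * expR z)%:E)%E.
Proof.
move=> g0 p1 pa.
set k := 2 * (p - 1) * gamma * ln 2 + 3 * Num.max 0 (- alpha) * ln 2.
set K := Num.max 2^-1 (expR gamma / gamma).
have [K_ge K_ge'] : 2^-1 <= K /\ expR gamma / gamma <= K by rewrite !le_max !lexx orbT.
exists (K + expR k) => [|A z mA hY]; first by rewrite addr_gt0 ?expR_gt0//; lra.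
have [a [a0 Ia ra]] : exists a, [/\ 0 < a,
    (\int[mu]_(t in `[0%R, a]) (sinh t `^ gamma)%:E
       <= (K * expR z)%:E)%E & (p - 1) * z - k <= ln_ratio_lb gamma alpha p a].
  have [z0|z0] := leP z 0.
    have [a [a0 Ia ra]] := exists_split_point_le0 g0 p1 pa z0; exists a; split => //.
    by apply: le_trans Ia _; rewrite lee_fin [X in X <= _]mulrC ler_wpM2r ?expR_ge0.
  have [a [a0 Ia ra]] := exists_split_point_ge0 g0 p1 pa (ltW z0); exists a; split => //.
  by apply: le_trans Ia _; rewrite lee_fin ler_wpM2r ?expR_ge0.
have weight_ge t : a < t -> expR ((p - 1) * z - k) * sinh t `^ gamma <=
                             cosh t `^ alpha * sinh t `^ (p * gamma - alpha).
  by move=> /ltW at_; exact: sinh_powR_le_weight g0 p1 pa a0 at_ ra.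
have := integral_indic_split mA (measurable_sinh_powR gamma)
  (measurable_cosh_sinh_powR alpha (p * gamma - alpha)) (fun t => powR_ge0 _ _)
  (fun t => mulr_ge0 (powR_ge0 _ _) (powR_ge0 _ _)) (expR_gt0 _) weight_ge.
move/le_trans; apply; rewrite [(K + _) * _]mulrDl EFinD leeD// -expRN.
have -> : (\int[mu]_(t in `]0%R, +oo[)
              ((\1_A t : R) * (cosh t `^ alpha * sinh t `^ (p * gamma - alpha)))%:E
          = \int[mu]_(t in `]0%R, +oo[)
              ((\1_A t : R) * cosh t `^ alpha * sinh t `^ (p * gamma - alpha))%:E)%E.
  by apply: eq_integral => t _; rewrite mulrA.
apply: le_trans (lee_wpmul2l _ hY) _; first by rewrite lee_fin expR_ge0.
by rewrite -EFinM lee_fin -!expRD ler_expR; lra.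
Qed.

End sinh_weighted_inequality.

Theorem lemma5p3 (R : realType) (gamma alpha p : R) :
  0 < gamma -> Num.max 1 (1 - alpha) <= p ->
  exists C : R, 0 < C /\
    forall A : set R, measurable A -> A `<=` `]0%R, +oo[ ->
      (lebesgue_measure A < +oo)%E ->
      (\int[lebesgue_measure]_(t in `]0%R, +oo[)
          ((\1_A t : R) * sinh t `^ gamma)%:E
       <= C%:E * poweR (\int[lebesgue_measure]_(t in `]0%R, +oo[)
          ((\1_A t : R) * cosh t `^ alpha * sinh t `^ (p * gamma - alpha))%:E)
          p^-1)%E.
Proof.
move=> g0; rewrite ge_max => /andP[p1 pa].
have [C C0 bound] := weighted_expR_bound g0 p1 pa.
exists C; split => // A mA _ _.
apply: le_mul_poweR_of_expR => //; first lra.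
- by apply: integral_ge0 => t _; rewrite lee_fin !mulr_ge0 ?powR_ge0.
- by move=> z; exact: bound.
Qed.
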